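(* Let $A=(i_1,\dots,i_a)$ be an ordered tuple of distinct elements of $I_d$, $\alpha\in\mathbb{Z}_2^{a,\mathrm{ev}}$, $j\in I_a$, and $r\ge0$. Then in $R_l[x_1,\dots,x_d]=R[x_1,\dots,x_d]/(x_1^l,\dots,x_d^l)$, $$x_{i_j}\,h^\alpha_r(A)=(-1)^{\alpha_j}\,h^\alpha_r(A)\,x_{\sigma_A(i_j)}.$$
   Context: $l,d\ge1$, $R$ a commutative ring, $I_a=\{1,\dots,a\}$. For an ordered tuple $A=(i_1,\dots,i_a)$ of distinct elements of $I_d$, $\sigma_A$ is the cyclic permutation $i_1\mapsto i_2\mapsto\dots\mapsto i_a\mapsto i_1$. For $\alpha\in\mathbb{Z}_2^a$, $|\alpha|=\sum_j\alpha_j$, $\mathbb{Z}_2^{a,\mathrm{ev}}$ is the set of $\alpha$ with $|\alpha|$ even, and $\epsilon^\alpha_j=\prod_{k<j}(-1)^{\alpha_k}$ (so $\epsilon^\alpha_1=1$). For $r\ge0$ and $\alpha\in\mathbb{Z}_2^{a,\mathrm{ev}}$, $h^\alpha_r(A)=\sum_{r_1+\dots+r_a=(a-1)(l-1)+r,\ r_j\ge0}\prod_{j=1}^a(\epsilon^\alpha_jx_{i_j})^{r_j}\in R_l[x_1,\dots,x_d]$. *)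

From HB Require Import structures.
From mathcomp Require Import all_boot all_algebra.
From mathcomp Require Export mpoly.
Set Implicit Arguments. Unset Strict Implicit. Unset Printing Implicit Defensive.
Import GRing.Theory.
Local Open Scope ring_scope.

(* Indices are 0-based: I_d is 'I_d, I_a is 'I_a.  An ordered tuple
   A = (i_1,...,i_a) of distinct elements is an injective map 'I_a -> 'I_d. *)

Definition epsA (a : nat) (alpha : 'I_a -> bool) (j : 'I_a) (R : comRingType) : R :=
  \prod_(k < a | (k < j)%N) (-1) ^+ alpha k.

Definition alpha_weight (a : nat) (alpha : 'I_a -> bool) : nat :=
  \sum_(k < a) (alpha k : nat).

(* the cyclic permutation sigma_A on the entries of A: i_j |-> i_{j+1}, i_a |-> i_1 *)
Definition sigmaA (a d : nat) (A : 'I_a -> 'I_d) (j : 'I_a) : 'I_d := A (ordS j).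

(* Each r_j is
   bounded by the total, so we sum over functions 'I_a -> 'I_(N+1). *)
Definition hA (R : comRingType) (d l a : nat) (A : 'I_a -> 'I_d)
    (alpha : 'I_a -> bool) (r : nat) : {mpoly R[d]} :=
  let N := ((a - 1) * (l - 1) + r)%N in
  \sum_(rr : {ffun 'I_a -> 'I_N.+1} | (\sum_(j < a) (rr j : nat))%N == N)
     \prod_(j < a) (epsA alpha j R *: 'X_(A j)) ^+ (rr j).

(* Equality in R_l[x_1..x_d] = R[x_1..x_d]/(x_1^l,...,x_d^l): the difference
   lies in the ideal generated by the x_i^l. *)
Definition eq_trunc (R : comRingType) (d l : nat) (p q : {mpoly R[d]}) : Prop :=
  exists c : 'I_d -> {mpoly R[d]}, p - q = \sum_(i < d) c i * 'X_i ^+ l.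

From HB Require Import structures.
From mathcomp Require Import all_boot all_algebra.
From mathcomp Require Import mpoly zify.
Import GRing.Theory.
Local Open Scope ring_scope.

(* Writing y_m = eps_m x_(i_m), h^alpha_r(A) is the complete homogeneous
   polynomial h_N(y_1,...,y_a) of degree N = (a-1)(l-1) + r.  Multiplying by
   y_j and discarding the monomials without y_j gives
   y_j h_N = h_(N+1) - h_(N+1)(y without y_j), so
   y_j h_N - y_(j+1) h_N = h_(N+1)(y without y_(j+1)) - h_(N+1)(y without y_j).
   Both terms involve only a-1 variables in degree N+1 > (a-1)(l-1), so every
   monomial has an exponent >= l and vanishes in R_l.  Finally
   x_(i_j) = eps_j y_j and (-1)^alpha_j x_(i_(j+1)) = eps_j y_(j+1); in the
   wrap-around case j = a the latter is where |alpha| even is needed. *)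

Lemma leq_term_sum n (e : 'I_n -> nat) m : (e m <= \sum_(i < n) e i)%N.
Proof. by rewrite (bigD1 m) //= leq_addr. Qed.

Lemma sum_gt_exists_ge n l (e : 'I_n -> nat) k :
  e k = 0%N -> ((n - 1) * (l - 1) < \sum_(i < n) e i)%N ->
  exists m, (l <= e m)%N.
Proof.
move=> ek0 sum_gt; apply/existsP; apply: contraLR sum_gt.
rewrite negb_exists -leqNgt => /forallP small.
rewrite (bigD1 k) //= ek0 add0n.
apply: (@leq_trans (\sum_(i < n | i != k) (l - 1))%N).
  by apply: leq_sum => i _; move: (small i); rewrite -ltnNge; lia.
by rewrite sum_nat_const cardC1 card_ord -subn1.
Qed.

Section ExponentShift.
Variables (a b : nat) (j : 'I_a).
Implicit Type e : {ffun 'I_a -> 'I_b.+1}.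

Definition incr_exp e : {ffun 'I_a -> 'I_b.+1} :=
  [ffun m => inord (e m + (m == j))].
Definition decr_exp e : {ffun 'I_a -> 'I_b.+1} :=
  [ffun m => inord (e m - (m == j))].

Lemma incr_expE e m : (e j < b)%N -> incr_exp e m = (e m + (m == j))%N :> nat.
Proof.
move=> ej_lt; rewrite ffunE inordK //.
by case: (eqVneq m j) => [->|_]; rewrite ?addn1 ?addn0.
Qed.

Lemma incr_exp_overflow e : e j = b :> nat -> incr_exp e j = 0%N :> nat.
Proof. by move=> ejb; rewrite ffunE eqxx /inord /insubd insubN // ejb addn1 ltnn. Qed.

Lemma decr_expE e m : decr_exp e m = (e m - (m == j))%N :> nat.
Proof. by rewrite ffunE inordK // (leq_ltn_trans (leq_subr _ _)). Qed.

Lemma incr_expK e : (e j < b)%N -> decr_exp (incr_exp e) = e.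
Proof.
by move=> ej_lt; apply/ffunP => m; apply/val_inj; rewrite /= decr_expE incr_expE ?addnK.
Qed.

Lemma decr_expK e : e j != 0%N :> nat -> incr_exp (decr_exp e) = e.
Proof.
move=> ej_ne0; have dj_lt : (decr_exp e j < b)%N.
  by rewrite decr_expE eqxx -ltnS subn1 prednK ?lt0n.
apply/ffunP => m; apply/val_inj; rewrite /= incr_expE // decr_expE.
by case: (eqVneq m j) => [->|_]; rewrite ?subn0 ?addn0 // subnK ?lt0n.
Qed.

Lemma sum_incr_exp e : (e j < b)%N ->
  (\sum_(m < a) incr_exp e m = (\sum_(m < a) e m).+1)%N.
Proof.
move=> ej_lt; rewrite (eq_bigr _ (fun m _ => incr_expE e m ej_lt)) big_split /=.
have nj0 : (\sum_(m < a | m != j) (m == j) = 0)%N by apply: big1 => m /negbTE ->.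
by rewrite [X in (_ + X)%N](bigD1 j) //= eqxx nj0 addn1.
Qed.

End ExponentShift.
Arguments incr_exp {a b} j e.
Arguments decr_exp {a b} j e.

Section CompleteHomogeneous.
Variables (S : comNzRingType) (a : nat) (y : 'I_a -> S).
Implicit Type P : pred 'I_a.

(* The complete homogeneous sum of degree [M] in the [y m] with [P m].  The
   exponents live in ['I_b.+1], as in [hA]; this is harmless while [M <= b]. *)
Definition exps_monomial b (e : {ffun 'I_a -> 'I_b.+1}) : S :=
  \prod_(m < a) y m ^+ e m.
Arguments exps_monomial {b} e.
Definition exps_on b (P : pred 'I_a) M (e : {ffun 'I_a -> 'I_b.+1}) : bool :=
  ((\sum_(m < a) e m)%N == M) && [forall m, ~~ P m ==> ((e m : nat) == 0%N)].
Definition hcomplete b P M := \sum_(e | exps_on b P M e) exps_monomial e.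

Lemma exps_on_le b P M e m : exps_on b P M e -> (e m <= M)%N.
Proof. by rewrite /exps_on => /andP[/eqP <- _]; apply: leq_term_sum. Qed.
Arguments exps_on_le {b P M e} m.

Lemma hcomplete_widen b P M : (M <= b)%N -> hcomplete b P M = hcomplete b.+1 P M.
Proof.
move=> leMb; rewrite /hcomplete.
pose narrow (e : {ffun 'I_a -> 'I_b.+2}) : {ffun 'I_a -> 'I_b.+1} :=
  [ffun m => inord (e m)].
pose widen (e : {ffun 'I_a -> 'I_b.+1}) : {ffun 'I_a -> 'I_b.+2} :=
  [ffun m => widen_ord (leqnSn _) (e m)].
have widenE e m : widen e m = e m :> nat by rewrite ffunE.
symmetry; rewrite (reindex_onto widen narrow) => [|e /exps_on_le e_le]; last first.
  apply/ffunP => m; apply/val_inj.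
  by rewrite !ffunE /= inordK // ltnS (leq_trans (e_le m) leMb).
apply: eq_big => [e|e _]; last by apply: eq_bigr => m _; rewrite widenE.
have -> : narrow (widen e) = e.
  by apply/ffunP => m; apply/val_inj; rewrite /= ffunE widenE inordK // ltnS ltnW.
rewrite eqxx andbT /exps_on (eq_bigr _ (fun m _ => widenE e m)).
by congr (_ && _); apply: eq_forallb => m; rewrite widenE.
Qed.

Lemma hcomplete_D1 b P M j : P j ->
  hcomplete b P M = hcomplete b (predD1 P j) M
                    + \sum_(e | exps_on b P M e && ((e j : nat) != 0%N)) exps_monomial e.
Proof.
move=> Pj; rewrite /hcomplete.
rewrite (bigID (fun e : {ffun 'I_a -> 'I_b.+1} => (e j : nat) == 0%N)) /=; congr (_ + _).
apply: eq_bigl => e; rewrite /exps_on -andbA; congr (_ && _).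
apply/andP/forallP => [[/forallP supp ej0] m | supp].
  by case: (eqVneq m j) => [->|ne_mj] /=; rewrite ?ej0 ?implybT // ne_mj; apply: supp.
split; last by move/implyP: (supp j); apply; rewrite /= eqxx.
apply/forallP => m; apply/implyP => nPm; apply: (implyP (supp m)).
by rewrite /= negb_and nPm orbT.
Qed.

(* Reindex by incrementing the [j]-th exponent. *)
Lemma mul_hcomplete b P M j : P j -> (M < b)%N ->
  y j * hcomplete b P M
  = \sum_(e | exps_on b P M.+1 e && ((e j : nat) != 0%N)) exps_monomial e.
Proof.
move=> Pj ltMb; rewrite /hcomplete mulr_sumr.
rewrite [RHS](reindex_onto (incr_exp j) (decr_exp j)) => [|e /andP[_]]; last exact: decr_expK.
have ej_lt e : exps_on b P M e -> (e j < b)%N.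
  by move=> on_e; apply: leq_ltn_trans (exps_on_le j on_e) ltMb.
apply: eq_big => [e|e /ej_lt lt_ej]; last first.
  rewrite /exps_monomial [RHS](eq_bigr (fun m => y m ^+ e m * y m ^+ (m == j))); last first.
    by move=> m _; rewrite incr_expE // exprD.
  rewrite big_split /= mulrC; congr (_ * _).
  by rewrite (bigD1 j) //= eqxx expr1 big1 ?mulr1 // => m /negbTE ->.
case: (ltnP (e j) b) => [lt_ej | ge_ej]; last first.
  have ejb : e j = b :> nat by apply/eqP; rewrite eqn_leq ge_ej -ltnS ltn_ord.
  rewrite incr_exp_overflow // eqxx andbF /=; apply/negbTE/negP => /ej_lt.
  by rewrite ejb ltnn.
rewrite incr_expK // incr_expE // eqxx addn1 eqxx !andbT /exps_on sum_incr_exp // eqSS.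
congr (_ && _); apply: eq_forallb => m; rewrite incr_expE //.
by case: (eqVneq m j) => [->|]; rewrite ?Pj ?addn0.
Qed.

Lemma mul_hcompleteE b P M j : P j -> (M < b)%N ->
  y j * hcomplete b P M = hcomplete b P M.+1 - hcomplete b (predD1 P j) M.+1.
Proof.
by move=> Pj ltMb; rewrite mul_hcomplete // (hcomplete_D1 b P M.+1 j Pj) addrC addKr.
Qed.

End CompleteHomogeneous.
Arguments exps_monomial {S a} y {b} e.
Arguments exps_on {a} b P M e.
Arguments hcomplete {S a} y b P M.

Section TruncIdeal.
Variables (R : comNzRingType) (d l : nat).

Definition trunc_ideal (p : {mpoly R[d]}) :=
  exists c : 'I_d -> {mpoly R[d]}, p = \sum_(i < d) c i * 'X_i ^+ l.

Lemma trunc_ideal0 : trunc_ideal 0.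
Proof. by exists (fun=> 0); rewrite big1 // => i _; rewrite mul0r. Qed.

Lemma trunc_idealD p q : trunc_ideal p -> trunc_ideal q -> trunc_ideal (p + q).
Proof.
move=> [c ->] [c' ->]; exists (fun i => c i + c' i).
by rewrite -big_split; apply: eq_bigr => i _; rewrite mulrDl.
Qed.

Lemma trunc_idealB p q : trunc_ideal p -> trunc_ideal q -> trunc_ideal (p - q).
Proof.
move=> [c ->] [c' ->]; exists (fun i => c i - c' i).
by rewrite -sumrB; apply: eq_bigr => i _; rewrite mulrBl.
Qed.

Lemma trunc_idealMl q p : trunc_ideal p -> trunc_ideal (q * p).
Proof.
move=> [c ->]; exists (fun i => q * c i).
by rewrite mulr_sumr; apply: eq_bigr => i _; rewrite mulrA.
Qed.

Lemma trunc_ideal_mulXn q i : trunc_ideal (q * 'X_i ^+ l).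
Proof.
exists (fun k => if k == i then q else 0).
by rewrite (bigD1 i) //= eqxx big1 ?addr0 // => k /negbTE ->; rewrite mul0r.
Qed.

Lemma hcomplete_trunc_ideal a (A : 'I_a -> 'I_d) (c : 'I_a -> R) b P M k :
  ~~ P k -> ((a - 1) * (l - 1) < M)%N ->
  trunc_ideal (hcomplete (fun m => c m *: 'X_(A m)) b P M).
Proof.
move=> nPk ltM; apply: big_ind; [exact: trunc_ideal0 | exact: trunc_idealD |].
move=> e /andP[/eqP sum_e /forallP supp].
have [m le_l] : exists m, (l <= e m)%N.
  apply: (@sum_gt_exists_ge a l (fun i => (e i : nat)) k); last by rewrite sum_e.
  exact/eqP/(implyP (supp k)).
rewrite /exps_monomial (bigD1 m) //= exprZn -(subnK le_l) [X in _ *: X]exprD.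
by rewrite scalerAl mulrAC; apply: trunc_ideal_mulXn.
Qed.

End TruncIdeal.
Arguments trunc_ideal {R d} l p.
Arguments hcomplete_trunc_ideal {R d l a A c b P M} k.

Lemma epsA_sqr (R : comNzRingType) a (alpha : 'I_a -> bool) j :
  epsA alpha j R * epsA alpha j R = 1.
Proof. by rewrite /epsA -big_split /=; apply: big1 => k _; rewrite -expr2 sqrr_sign. Qed.

Lemma epsA_ordS (R : comNzRingType) a (alpha : 'I_a -> bool) j :
  ~~ odd (alpha_weight alpha) ->
  (-1) ^+ alpha j * epsA alpha (ordS j) R = epsA alpha j R.
Proof.
move=> even_alpha; have [lt_ja | ge_ja] := ltnP j.+1 a.
  rewrite /epsA (_ : ordS j = j.+1 :> nat) /= ?modn_small //.
  rewrite (bigD1 j) ?ltnSn //= signrMK; apply: eq_bigl => k.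
  by rewrite ltnS ltn_neqAle andbC.
have ja : j.+1 = a by apply/eqP; rewrite eqn_leq ge_ja ltn_ord.
have -> : epsA alpha (ordS j) R = 1 by rewrite /epsA big_pred0 // => k; rewrite /= ja modnn.
have : \prod_(k < a) (-1) ^+ alpha k = 1 :> R.
  by rewrite prodrXr -signr_odd (negbTE even_alpha).
rewrite (bigD1 j) //= (eq_bigl (fun k : 'I_a => (k < j)%N)) => [prod1|k].
  by rewrite -{2}prod1 signrMK.
by rewrite ltn_neqAle -ltnS ja ltn_ord andbT.
Qed.

Theorem mainTheorem11 (R : comRingType) (l d a : nat) (hl : (1 <= l)%N) (hd : (1 <= d)%N)
  (A : 'I_a -> 'I_d) (hA_inj : injective A)
  (alpha : 'I_a -> bool) (halpha : ~~ odd (alpha_weight alpha))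
  (j : 'I_a) (r : nat) :
  eq_trunc l ('X_(A j) * hA R l A alpha r)
             ((-1) ^+ alpha j * hA R l A alpha r * 'X_(sigmaA A j)).
Proof.
pose N := ((a - 1) * (l - 1) + r)%N.
pose y m : {mpoly R[d]} := epsA alpha m R *: 'X_(A m).
have -> : hA R l A alpha r = hcomplete y N.+1 predT N.
  rewrite -hcomplete_widen //; apply: eq_bigl => e.
  by rewrite /exps_on (_ : [forall m, _]) ?andbT //; apply/forallP.
set h := hcomplete y N.+1 predT N.
have lhsE : 'X_(A j) * h = epsA alpha j R *: (y j * h).
  by rewrite -scalerAl scalerA epsA_sqr scale1r.
have rhsE : (-1) ^+ alpha j * h * 'X_(sigmaA A j) = epsA alpha j R *: (y (ordS j) * h).
  rewrite -scalerAl scalerA -{1}(epsA_ordS R a alpha j halpha).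
  rewrite -[X in X *: _]mulrA epsA_sqr mulr1 -mul_mpolyC rmorph_sign.
  by rewrite mulrA mulrAC.
suff : trunc_ideal l (epsA alpha j R *: (y j * h - y (ordS j) * h)).
  by rewrite scalerBr -lhsE -rhsE.
rewrite -mul_mpolyC; apply: trunc_idealMl.
have ltN : ((a - 1) * (l - 1) < N.+1)%N by rewrite ltnS leq_addr.
rewrite /h !mul_hcompleteE // opprB addrC addrA addrNK.
apply: trunc_idealB.
  by apply: (hcomplete_trunc_ideal (ordS j)); rewrite //= eqxx.
by apply: (hcomplete_trunc_ideal j); rewrite //= eqxx.
Qed.
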